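(* Let $M$ be a graded generalized Eulerian $A_n(K)$-module which is finitely generated as an $R$-module. Then either $M=0$ or $M\cong R^m$ (as graded $R$-modules, with all free generators in degree $0$) for some $m\ge1$.
   Context: $K$ is a field of characteristic zero, $R=K[X_1,\dots,X_n]$ standard graded, $A_n(K)$ the Weyl algebra graded by $\deg X_i=1$, $\deg\partial_i=-1$; $\mathcal E_n=\sum_iX_i\partial_i$; $|z|$ is the degree of homogeneous $z$. A graded left $A_n(K)$-module $M$ is generalized Eulerian if for every homogeneous $z\in M$ there is $a\ge1$ with $(\mathcal E_n-|z|)^az=0$. *)

From HB Require Import structures.
From mathcomp Require Import all_boot all_order all_algebra.
Set Implicit Arguments. Unset Strict Implicit. Unset Printing Implicit Defensive.
Import Order.TTheory GRing.Theory Num.Theory.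
Local Open Scope ring_scope.

(* A left A_n(K)-module structure on the K-vector space M is given by the
   actions X i (multiplication by X_i) and D i (action of \partial_i),
   which are K-linear and satisfy the Weyl algebra relations. *)
Definition weyl_action (K : fieldType) (M : lmodType K) (n : nat)
    (X D : 'I_n -> M -> M) : Prop :=
  [/\ forall i, linear (X i), forall i, linear (D i),
      forall i j v, X i (X j v) = X j (X i v),
      forall i j v, D i (D j v) = D j (D i v) &
      forall i j v, D i (X j v) - X j (D i v) = (if i == j then v else 0)].

(* Grading: G d is the degree-d homogeneous component M_d (a subspace);
   M is the direct sum of the M_d, d : int. *)
Definition graded (K : fieldType) (M : lmodType K) (G : int -> M -> Prop) : Prop :=
  [/\ forall d, G d 0,
      forall d u v, G d u -> G d v -> G d (u + v),
      forall d (a : K) v, G d v -> G d (a *: v),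
      forall v, exists (s : seq int) (z : int -> M),
          (forall d, d \in s -> G d (z d)) /\ v = \sum_(d <- s) z d &
      forall (s : seq int) (z : int -> M), uniq s ->
          (forall d, d \in s -> G d (z d)) -> \sum_(d <- s) z d = 0 ->
          forall d, d \in s -> z d = 0].

Definition graded_action (K : fieldType) (M : lmodType K) (n : nat)
    (X D : 'I_n -> M -> M) (G : int -> M -> Prop) : Prop :=
  (forall i d v, G d v -> G (d + 1) (X i v)) /\
  (forall i d v, G d v -> G (d - 1) (D i v)).

Definition euler (K : fieldType) (M : lmodType K) (n : nat)
    (X D : 'I_n -> M -> M) (v : M) : M :=
  \sum_(i < n) X i (D i v).

Definition gen_eulerian (K : fieldType) (M : lmodType K) (n : nat)
    (X D : 'I_n -> M -> M) (G : int -> M -> Prop) : Prop :=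
  forall (d : int) (z : M), G d z ->
    exists a : nat, (0 < a)%N /\
      iter a (fun w => euler X D w - d%:~R *: w) z = 0.

Definition xmono (K : fieldType) (M : lmodType K) (n : nat)
    (X : 'I_n -> M -> M) (alpha : {ffun 'I_n -> nat}) (v : M) : M :=
  foldr (fun i w => iter (alpha i) (X i) w) v (enum 'I_n).

Definition in_Rspan (K : fieldType) (M : lmodType K) (n m : nat)
    (X : 'I_n -> M -> M) (g : 'I_m -> M) (v : M) : Prop :=
  exists (s : seq ({ffun 'I_n -> nat} * 'I_m))
         (c : {ffun 'I_n -> nat} * 'I_m -> K),
    v = \sum_(k <- s) c k *: xmono X k.1 (g k.2).

Definition fin_gen_R (K : fieldType) (M : lmodType K) (n : nat)
    (X : 'I_n -> M -> M) : Prop :=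
  exists (m : nat) (g : 'I_m -> M), forall v, in_Rspan X g v.

(* the family e : 'I_m -> M is an R-basis of M, i.e. the map R^m -> M,
   (p_j)_j |-> \sum_j p_j e_j, is an isomorphism of R-modules: the elements
   X^alpha e_j are K-linearly independent and span M. *)
Definition R_basis (K : fieldType) (M : lmodType K) (n m : nat)
    (X : 'I_n -> M -> M) (e : 'I_m -> M) : Prop :=
  (forall v, in_Rspan X e v) /\
  (forall (s : seq ({ffun 'I_n -> nat} * 'I_m))
          (c : {ffun 'I_n -> nat} * 'I_m -> K),
      uniq s -> \sum_(k <- s) c k *: xmono X k.1 (e k.2) = 0 ->
      forall k, k \in s -> c k = 0).

From HB Require Import structures.
From mathcomp Require Import all_boot all_order all_algebra zify.
From Stdlib Require Import Classical.
Import Order.TTheory GRing.Theory Num.Theory.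
Local Open Scope ring_scope.

(* For d <> 0, the generalized eigenvalue d of the Euler operator E on M_d
   makes E invertible there, so M_d = E(M_d) lies in sum_i X_i M_(d-1).
   Finite generation bounds the degrees from below, whence M_d = 0 for d < 0
   by descending induction, and M_0 is finite dimensional; by ascending
   induction M is then generated over R by a K-basis e_1, ..., e_m of M_0.
   Each e_j has degree 0, so D_i e_j = 0 and D_i (X^a e_j) = a_i X^(a - 1_i) e_j;
   applying the D_i to a relation among the X^a e_j lowers degrees while
   keeping coefficients nonzero (characteristic 0), so the X^a e_j are free. *)

Lemma sum_partition_seq {V : nmodType} {I T : eqType} (t : seq I) (f : I -> T)
    (S : seq T) (F : I -> V) :
  uniq S -> (forall x, x \in t -> f x \in S) ->
  \sum_(y <- S) \sum_(x <- t | f x == y) F x = \sum_(x <- t) F x.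
Proof.
move=> S_uniq tS; under eq_bigr do rewrite big_mkcond.
rewrite exchange_big /= big_seq [RHS]big_seq; apply: eq_bigr => x xt.
rewrite (bigD1_seq (f x)) ?tS //= eqxx big1 ?addr0 // => y /negbTE yx.
by rewrite eq_sym yx.
Qed.

Section LinearFun.
Context {R : pzRingType} {V : lmodType R}.
Implicit Types (f g : V -> V) (u v : V).

Lemma linD {f u v} : linear f -> f (u + v) = f u + f v.
Proof. by move=> lf; have := lf 1 u v; rewrite !scale1r. Qed.

Lemma lin0 {f} : linear f -> f 0 = 0.
Proof. by move=> lf; have := lf (-1) 0 0; rewrite !scaleN1r !addNr. Qed.

Lemma linZ {f a v} : linear f -> f (a *: v) = a *: f v.
Proof. by move=> lf; have := lf a v 0; rewrite !addr0 (lin0 lf) addr0. Qed.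

Lemma linB {f u v} : linear f -> f (u - v) = f u - f v.
Proof. by move=> lf; rewrite addrC -scaleN1r lf scaleN1r addrC. Qed.

Lemma lin_sum {f} {I : Type} {r : seq I} {P : pred I} {F : I -> V} :
  linear f -> f (\sum_(i <- r | P i) F i) = \sum_(i <- r | P i) f (F i).
Proof. by move=> lf; apply: (big_morph f (fun u v => linD lf) (lin0 lf)). Qed.

Lemma linear_comp {f g} : linear f -> linear g -> linear (f \o g).
Proof. by move=> lf lg a u v /=; rewrite lg lf. Qed.

Lemma linear_iter {f} k : linear f -> linear (iter k f).
Proof. by move=> lf; elim: k => [|k IH] a u v //=; rewrite IH lf. Qed.

Lemma linear_bigsum (I : Type) (r : seq I) (F : I -> V -> V) :
  (forall i, linear (F i)) -> linear (fun v => \sum_(i <- r) F i v).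
Proof.
move=> lF a u v; elim: r => [|i r IH]; first by rewrite !big_nil scaler0 addr0.
by rewrite !big_cons lF IH scalerDr addrACA.
Qed.

End LinearFun.

Section LinearCombinations.
Context {R : pzRingType} {V : lmodType R} {I : Type} (f : I -> V).

(* Unlike [in_Rspan], the coefficients travel with the list, so that sums of
   combinations are just concatenations. *)
Definition lincomb v := exists t : seq (I * R), v = \sum_(x <- t) x.2 *: f x.1.

Lemma lincomb0 : lincomb 0.
Proof. by exists [::]; rewrite big_nil. Qed.

Lemma lincombD u v : lincomb u -> lincomb v -> lincomb (u + v).
Proof. by move=> [t1 ->] [t2 ->]; exists (t1 ++ t2); rewrite big_cat. Qed.

Lemma lincombZ a v : lincomb v -> lincomb (a *: v).
Proof.
move=> [t ->]; exists [seq (x.1, a * x.2) | x <- t].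
by rewrite big_map scaler_sumr; apply: eq_bigr => x _; rewrite scalerA.
Qed.

Lemma lincomb_sum (J : Type) (r : seq J) (P : pred J) (F : J -> V) :
  (forall j, P j -> lincomb (F j)) -> lincomb (\sum_(j <- r | P j) F j).
Proof. by move=> lF; apply: big_ind => //; [exact: lincomb0 | exact: lincombD]. Qed.

Lemma lincomb_mem i : lincomb (f i).
Proof. by exists [:: (i, 1)]; rewrite big_seq1 scale1r. Qed.

End LinearCombinations.

Lemma lincomb_map {R : pzRingType} {V : lmodType R} {I J : Type}
    {f : I -> V} {f' : J -> V} {g : V -> V} {h : I -> J} {v} :
  linear g -> (forall i, g (f i) = f' (h i)) -> lincomb f v -> lincomb f' (g v).
Proof.
move=> lg gf [t ->]; exists [seq (h x.1, x.2) | x <- t].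
by rewrite big_map (lin_sum lg); apply: eq_bigr => x _; rewrite (linZ lg) gf.
Qed.

Lemma lincomb_uniq {R : pzRingType} {V : lmodType R} {I : eqType} {f : I -> V} {v} :
  lincomb f v -> exists (s : seq I) (c : I -> R), v = \sum_(i <- s) c i *: f i.
Proof.
move=> [t ->]; exists (undup [seq x.1 | x <- t]).
exists (fun i => \sum_(x <- t | x.1 == i) x.2).
rewrite -(sum_partition_seq t (fun x => x.1) (undup [seq x.1 | x <- t])) ?undup_uniq //.
  by apply: eq_bigr => i _; rewrite scaler_suml; apply: eq_bigr => x /eqP ->.
by move=> x xt; rewrite mem_undup map_f.
Qed.

Lemma pchar0_intr_eq0 (R : idomainType) :
  [pchar R] =i pred0 -> forall d : int, (d%:~R == 0 :> R) = (d == 0).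
Proof.
move=> /pcharf0P R0 [k|k]; first by rewrite -pmulrn R0.
by rewrite NegzE mulrNz oppr_eq0 -pmulrn R0.
Qed.

Section FreeFamilies.
Context {K : fieldType} {V : lmodType K}.

Definition free_fam {m} (e : 'I_m -> V) :=
  forall c : 'I_m -> K, \sum_j c j *: e j = 0 -> forall j, c j = 0.

Lemma free_subfamily (H : seq V) : exists m (e : 'I_m -> V),
  [/\ free_fam e, forall j, e j \in H & forall h, h \in H -> lincomb e h].
Proof.
elim: H => [|h H [m [e [efree eH He]]]].
  by exists 0%N, (fun _ => 0); split=> [c _ []|[]|].
have [h_dep | h_indep] := classic (lincomb e h).
  exists m, e; split=> // [j | x]; first by rewrite inE eH orbT.
  by rewrite inE => /predU1P[->|/He].
pose e' (j : 'I_m.+1) := if unlift ord0 j is Some k then e k else h.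
have e'0 : e' ord0 = h by rewrite /e' unlift_none.
have e'S k : e' (lift ord0 k) = e k by rewrite /e' liftK.
exists m.+1, e'; split.
- move=> c; rewrite big_ord_recl e'0; under eq_bigr do rewrite e'S.
  move=> rel; have c0 : c ord0 = 0.
    apply/eqP; apply: contra_notT h_indep => c0.
    move/(congr1 ( *:%R (c ord0)^-1)): rel.
    rewrite scaler0 scalerDr scalerA mulVf // scale1r => /eqP.
    rewrite addr_eq0 => /eqP ->; rewrite -scaleN1r; apply/lincombZ/lincombZ.
    by apply: lincomb_sum => k _; apply/lincombZ/lincomb_mem.
  move: rel; rewrite c0 scale0r add0r => /efree ck j.
  by case: (unliftP ord0 j) => [k ->|->].
- by move=> j; rewrite /e'; case: (unlift ord0 j) => [k|]; rewrite inE ?eH ?orbT ?eqxx.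
- move=> x; rewrite inE => /predU1P[->|/He]; first by rewrite -e'0; apply: lincomb_mem.
  by apply: lincomb_map (fun k => esym (e'S k)).
Qed.

End FreeFamilies.

Section Graded.
Context {K : fieldType} {M : lmodType K} {G : int -> M -> Prop} (HG : graded G).

Lemma homog0 d : G d 0.
Proof. by case: HG. Qed.

Lemma homogD d u v : G d u -> G d v -> G d (u + v).
Proof. by case: HG => _ + _ _ _; apply. Qed.

Lemma homogZ d a v : G d v -> G d (a *: v).
Proof. by case: HG => _ _ + _ _; apply. Qed.

Lemma homogB d u v : G d u -> G d v -> G d (u - v).
Proof. by move=> Gu Gv; rewrite -scaleN1r; apply/homogD/homogZ. Qed.

Lemma homog_sum d (I : Type) (r : seq I) (P : pred I) (F : I -> M) :
  (forall i, P i -> G d (F i)) -> G d (\sum_(i <- r | P i) F i).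
Proof. by move=> GF; apply: big_ind => //; [exact: homog0 | exact: homogD]. Qed.

(* Directness of the sum, applied to the components of [t] minus [z]. *)
Lemma homog_component {d z} {t : seq (int * M)} :
  (forall x, x \in t -> G x.1 x.2) -> G d z -> z = \sum_(x <- t) x.2 ->
  z = \sum_(x <- t | x.1 == d) x.2.
Proof.
move=> Gt Gz zE.
pose S := undup (d :: map fst t).
pose w e := \sum_(x <- t | x.1 == e) x.2 - (if e == d then z else 0).
have Gw e : e \in S -> G e (w e).
  move=> _; apply: homogB.
    by rewrite big_seq_cond; apply: homog_sum => x /andP[xt /eqP <-]; exact: Gt.
  by case: eqP => [->|_]; [exact: Gz | exact: homog0].
have dS : d \in S by rewrite mem_undup mem_head.
have w0 : \sum_(e <- S) w e = 0.
  rewrite sumrB sum_partition_seq ?undup_uniq //; last first.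
    by move=> x xt; rewrite mem_undup inE map_f ?orbT.
  rewrite (bigD1_seq d) ?undup_uniq //= eqxx.
  by rewrite [X in z + X]big1 ?addr0 -?zE ?subrr // => e /negbTE ->.
case: HG => _ _ _ _ /(_ S w (undup_uniq _) Gw w0 d dS).
by rewrite /w eqxx => /subr0_eq.
Qed.

Definition homog_decomp (P : int -> M -> Prop) v :=
  exists t : seq (int * M), v = \sum_(x <- t) x.2 /\
    forall x, x \in t -> G x.1 x.2 /\ P x.1 x.2.

Lemma graded_decomp v : homog_decomp (fun _ _ => True) v.
Proof.
case: HG => _ _ _ /(_ v) [s [z [Gz ->]]] _.
exists [seq (d, z d) | d <- s]; rewrite big_map; split=> // _ /mapP[d ds ->].
by split=> //; exact: Gz.
Qed.

Lemma homog_decomp_component (P : int -> M -> Prop) (Q : M -> Prop) d z :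
  Q 0 -> (forall u v, Q u -> Q v -> Q (u + v)) ->
  (forall w, G d w -> P d w -> Q w) -> G d z -> homog_decomp P z -> Q z.
Proof.
move=> Q0 QD QP Gz [t [zE Pt]].
rewrite (homog_component (fun x xt => (Pt x xt).1) Gz zE) big_seq_cond.
apply: big_ind => // x /andP[xt /eqP xd]; have [Gx Px] := Pt x xt.
by apply: QP; rewrite -xd.
Qed.

End Graded.

Arguments homog_decomp {K M} G P v.

Section Monomials.
Context {n : nat}.
Implicit Types al : {ffun 'I_n -> nat}.

Definition mono_add1 al i : {ffun 'I_n -> nat} := [ffun j => al j + (j == i)]%N.
Definition mono_sub1 al i : {ffun 'I_n -> nat} := [ffun j => al j - (j == i)]%N.
Definition mdeg al := (\sum_i al i)%N.

Lemma mono_sub1K al i : (0 < al i)%N -> mono_add1 (mono_sub1 al i) i = al.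
Proof. by move=> ai; apply/ffunP => j; rewrite !ffunE; case: eqP => [->|] /=; lia. Qed.

Lemma mdeg_sub1 al i : (0 < al i)%N -> mdeg (mono_sub1 al i) = (mdeg al).-1.
Proof.
move=> ai; rewrite /mdeg (bigD1 i) // [in RHS](bigD1 i) //= ffunE eqxx.
under eq_bigr => j /negbTE ji do rewrite ffunE ji subn0.
by move: ai; lia.
Qed.

Lemma mdeg_eq0 al : (mdeg al == 0)%N = [forall i, al i == 0%N].
Proof. exact: sum_nat_eq0. Qed.

End Monomials.

Section WeylModule.
Context {K : fieldType} {n : nat} {M : lmodType K}
  {X D : 'I_n -> M -> M} {G : int -> M -> Prop}.
Hypotheses (HW : weyl_action X D) (HG : graded G) (HA : graded_action X D G).
Implicit Types al : {ffun 'I_n -> nat}.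

Lemma X_linear i : linear (X i).
Proof. by case: HW. Qed.

Lemma D_linear i : linear (D i).
Proof. by case: HW. Qed.

Lemma X_comm i j v : X i (X j v) = X j (X i v).
Proof. by case: HW => _ _ + _ _; apply. Qed.

Lemma D_X i j v : D i (X j v) = X j (D i v) + (if i == j then v else 0).
Proof. by case: HW => _ _ _ _ /(_ i j v) <-; rewrite addrC subrK. Qed.

Lemma homogX i d v : G d v -> G (d + 1) (X i v).
Proof. by case: HA => + _; apply. Qed.

Lemma homogDi i d v : G d v -> G (d - 1) (D i v).
Proof. by case: HA => _; apply. Qed.

Local Notation E := (euler X D).

Lemma euler_linear : linear E.
Proof. by apply: linear_bigsum => i; exact: linear_comp (X_linear i) (D_linear i). Qed.

Lemma homog_euler d v : G d v -> G d (E v).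
Proof.
move=> Gv; apply: (homog_sum HG) => i _.
by rewrite -[d](subrK 1); apply/homogX/homogDi.
Qed.

Let xmono_seq r al v := foldr (fun i w => iter (al i) (X i) w) v r.

Lemma xmono_seq_eq_in r al (be : {ffun 'I_n -> nat}) v :
  {in r, al =1 be} -> xmono_seq r al v = xmono_seq r be v.
Proof.
elim: r => [|i r IH] //= eq_ab.
by rewrite eq_ab ?mem_head // IH // => j jr; rewrite eq_ab // inE jr orbT.
Qed.

Lemma xmono_closed (S : M -> Prop) al v :
  (forall i w, S w -> S (X i w)) -> S v -> S (xmono X al v).
Proof.
move=> SX Sv; rewrite /xmono; elim: (enum 'I_n) => [|i r IH] //=.
by elim: (al i) => [|a IHa] //=; apply: SX.
Qed.

Lemma xmono_eq_id al v : (forall i, al i = 0%N) -> xmono X al v = v.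
Proof. by move=> al0; rewrite /xmono; elim: (enum 'I_n) => //= i r ->; rewrite al0. Qed.

Lemma xmono_linear al : linear (xmono X al).
Proof.
rewrite /xmono; elim: (enum 'I_n) => [|i r IH] a u v //=.
by rewrite IH (linear_iter (al i) (X_linear i)).
Qed.

Lemma homog_xmono al d v : G d v -> G (d + (mdeg al)%:Z) (xmono X al v).
Proof.
have -> : mdeg al = (\sum_(i <- enum 'I_n) al i)%N by rewrite big_enum.
move=> Gv; rewrite /xmono; elim: (enum 'I_n) => [|i r IH] /=.
  by rewrite big_nil addr0.
rewrite big_cons PoszD addrCA addrC; elim: (al i) => [|a IHa]; first by rewrite addr0.
by rewrite iterS -[a.+1]addn1 PoszD addrA; apply: homogX.
Qed.

Lemma X_iter i j a w : X i (iter a (X j) w) = iter a (X j) (X i w).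
Proof. by elim: a => [|a IH] //=; rewrite X_comm IH. Qed.

Lemma D_iter_neq i j a w : i != j -> D i (iter a (X j) w) = iter a (X j) (D i w).
Proof. by move=> /negbTE ij; elim: a => [|a IH] //=; rewrite D_X ij addr0 IH. Qed.

Lemma D_iter i a w :
  D i (iter a (X i) w) = iter a (X i) (D i w) + a%:R *: iter a.-1 (X i) w.
Proof.
elim: a => [|a IH] /=; first by rewrite scale0r addr0.
rewrite D_X eqxx IH (linD (X_linear i)) (linZ (X_linear i)) -addrA; congr (_ + _).
case: a {IH} => [|a] /=; first by rewrite scale0r add0r scale1r.
by rewrite [a.+2%:R]mulrSr scalerDl scale1r.
Qed.

Lemma X_xmono_seq r al i v : uniq r ->
  X i (xmono_seq r al v) =
    if i \in r then xmono_seq r (mono_add1 al i) v else xmono_seq r al (X i v).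
Proof.
elim: r => [|j r IH] //= /andP[jr r_uniq].
rewrite inE X_iter; case: eqP => [ij|/eqP ij] /=.
  subst j; rewrite -X_iter -iterS ffunE eqxx addn1 (xmono_seq_eq_in r _ al) // => k kr.
  by rewrite ffunE; case: eqP => [ki|]; [move: jr; rewrite -ki kr | rewrite addn0].
by rewrite IH // ffunE eq_sym (negbTE ij) addn0; case: (i \in r).
Qed.

Lemma D_xmono_seq r al i v : uniq r ->
  D i (xmono_seq r al v) = xmono_seq r al (D i v) +
    (if i \in r then (al i)%:R *: xmono_seq r (mono_sub1 al i) v else 0).
Proof.
have lXa j a : linear (iter a (X j)) by exact: linear_iter a (X_linear j).
elim: r => [|j r IH] /=; first by rewrite addr0.
move=> /andP[jr r_uniq]; rewrite inE; case: eqP => [ij|/eqP ij] /=.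
  subst j; rewrite D_iter IH // (negbTE jr) addr0 ffunE eqxx subn1.
  rewrite (xmono_seq_eq_in r _ al) // => k kr.
  by rewrite ffunE; case: eqP => [ki|]; [move: jr; rewrite -ki kr | rewrite subn0].
rewrite D_iter_neq // IH // (linD (lXa _ _)).
case: (i \in r); last by rewrite (lin0 (lXa _ _)).
by rewrite (linZ (lXa _ _)) ffunE eq_sym (negbTE ij) subn0.
Qed.

Lemma X_xmono i al v : X i (xmono X al v) = xmono X (mono_add1 al i) v.
Proof. by rewrite [LHS]X_xmono_seq ?enum_uniq // mem_enum. Qed.

Lemma D_xmono i al v :
  D i (xmono X al v) = xmono X al (D i v) + (al i)%:R *: xmono X (mono_sub1 al i) v.
Proof. by rewrite [LHS]D_xmono_seq ?enum_uniq // mem_enum. Qed.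

Hypotheses (Hch : [pchar K] =i pred0) (HE : gen_eulerian X D G) (HF : fin_gen_R X).

(* (E - d)^a z = 0 and (T - d)^a = (-d)^a + T q(T), where (-d)^a is invertible
   in characteristic 0. *)
Lemma euler_image {d z} : d != 0 -> G d z -> exists2 w, G d w & z = E w.
Proof.
move=> d0 Gz; pose c : K := d%:~R.
have iterE a : exists2 w, G d w &
    iter a (fun w => E w - c *: w) z = (- c) ^+ a *: z + E w.
  elim: a => [|a [w Gw IH]].
    by exists 0; [exact: (homog0 HG) | rewrite expr0 scale1r (lin0 euler_linear) addr0].
  exists ((- c) ^+ a *: z + E w - c *: w).
    apply/(homogB HG)/(homogZ HG) => //.
    by apply/(homogD HG); [apply/(homogZ HG) | apply/homog_euler].
  rewrite iterS IH (linB euler_linear) (linD euler_linear) (linZ euler_linear).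
  rewrite (linZ euler_linear) scalerDr exprSr -scalerA scaleNr scalerN.
  rewrite [c *: (_ *: z)]scalerA [_ *: (c *: z)]scalerA mulrC.
  by rewrite opprD addrCA.
have [a [a_gt0 Ea]] := HE _ _ Gz.
have [w Gw Ew] := iterE a.
have ca : (- c) ^+ a != 0 by rewrite expf_neq0 // oppr_eq0 pchar0_intr_eq0.
exists (- ((- c) ^+ a)^-1 *: w); first exact: (homogZ HG).
move: Ea; rewrite Ew => /eqP; rewrite addr_eq0 => /eqP Ez.
by rewrite (linZ euler_linear) scaleNr -scalerN -Ez scalerA mulVf ?scale1r.
Qed.

Section Decomposition.
Variable P : int -> M -> Prop.
Hypotheses (PZ : forall d a w, G d w -> P d w -> P d (a *: w))
  (PX : forall i d w, G d w -> P d w -> P (d + 1) (X i w)).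

Lemma homog_decomp0 : homog_decomp G P 0.
Proof. by exists [::]; rewrite big_nil. Qed.

Lemma homog_decompD u v :
  homog_decomp G P u -> homog_decomp G P v -> homog_decomp G P (u + v).
Proof.
move=> [t1 [-> Pt1]] [t2 [-> Pt2]]; exists (t1 ++ t2); rewrite big_cat.
by split=> // x; rewrite mem_cat => /orP[/Pt1|/Pt2].
Qed.

Lemma homog_decompZ a v : homog_decomp G P v -> homog_decomp G P (a *: v).
Proof.
move=> [t [-> Pt]]; exists [seq (x.1, a *: x.2) | x <- t].
rewrite big_map scaler_sumr; split=> // _ /mapP[x xt ->] /=.
by have [Gx Px] := Pt x xt; split; [exact: (homogZ HG) | exact: PZ].
Qed.

Lemma homog_decompX i v : homog_decomp G P v -> homog_decomp G P (X i v).
Proof.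
move=> [t [-> Pt]]; exists [seq (x.1 + 1, X i x.2) | x <- t].
rewrite big_map (lin_sum (X_linear i)); split=> // _ /mapP[x xt ->] /=.
by have [Gx Px] := Pt x xt; split; [exact: homogX | exact: PX].
Qed.

Lemma homog_decomp_Rspan m (g : 'I_m -> M) v :
  (forall j, homog_decomp G P (g j)) -> in_Rspan X g v -> homog_decomp G P v.
Proof.
move=> Pg [s [c ->]]; apply: big_ind => [|u w|k _]; first exact: homog_decomp0.
  exact: homog_decompD.
apply/homog_decompZ/(xmono_closed (homog_decomp G P)) => // i w.
exact: homog_decompX.
Qed.

End Decomposition.

(* [hs] lists the homogeneous components of finitely many R-module generators. *)
Lemma fin_gen_homog : exists hs : seq (int * M),
  (forall x, x \in hs -> G x.1 x.2) /\
  forall P : int -> M -> Prop,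
    (forall d a w, G d w -> P d w -> P d (a *: w)) ->
    (forall i d w, G d w -> P d w -> P (d + 1) (X i w)) ->
    (forall x, x \in hs -> P x.1 x.2) -> forall v, homog_decomp G P v.
Proof.
have [m [g g_span]] := HF.
have [t tE] := fin_all_exists (fun j => graded_decomp HG (g j)).
pose hs := flatten [seq t j | j <- enum 'I_m].
have t_hs j x : x \in t j -> x \in hs.
  by move=> xt; apply/flattenP; exists (t j); rewrite ?map_f ?mem_enum.
exists hs; split=> [x /flattenP[_ /mapP[j _ ->]] /(tE j).2[]//|P PZ PX Phs v].
apply: (homog_decomp_Rspan _ PZ PX _ _ _ _ (g_span v)) => j.
have [gE Gt] := tE j; exists (t j); split=> // x xt.
by have [Gx _] := Gt x xt; split; last exact: Phs (t_hs j x xt).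
Qed.

Lemma homog_bounded_below : exists L, forall d z, d < L -> G d z -> z = 0.
Proof.
have [hs [_ hs_decomp]] := fin_gen_homog.
pose L := \big[Order.min/0]_(x <- hs) x.1.
exists L => d z dL Gz.
apply: (homog_decomp_component HG (fun d _ => L <= d) (fun w => w = 0)) Gz _ => //.
- by move=> u v -> ->; rewrite addr0.
- by move=> w _ Ld; move: dL; rewrite ltNge Ld.
apply: hs_decomp => [//|i e w _ Le|x xhs]; first by rewrite (le_trans Le) ?lerDl.
exact: ge_bigmin_seq.
Qed.

(* Descending induction from the lower bound: z = E w = sum_i X_i (D_i w),
   and each D_i w lives one degree lower. *)
Lemma homog_neg_eq0 d z : d < 0 -> G d z -> z = 0.
Proof.
have [L L_bound] := homog_bounded_below.
suff: forall N : nat, forall d z, d < L + N%:Z -> d < 0 -> G d z -> z = 0.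
  by move=> /(_ `|L|%N d z) + d0; apply => //; lia.
elim=> [|N IH] {}d {}z dLN d0 Gz; first by apply: (L_bound d) => //; lia.
have [w Gw ->] := euler_image (ltr0_neq0 d0) Gz.
rewrite /euler big1 // => i _.
rewrite (IH (d - 1) (D i w)) ?(lin0 (X_linear i)) //; [lia | lia | exact: homogDi].
Qed.

Lemma homog0_basis : exists m (e : 'I_m -> M),
  [/\ forall j, G 0 (e j), free_fam e & forall z, G 0 z -> lincomb e z].
Proof.
have [hs [Ghs hs_decomp]] := fin_gen_homog.
have [m [e [efree eH He]]] := free_subfamily [seq x.2 | x <- hs & x.1 == 0].
exists m, e; split=> [j|//|z Gz].
  by have /mapP[x] := eH j; rewrite mem_filter => /andP[/eqP <- /Ghs] + ->.
apply: (homog_decomp_component HG (fun d w => d = 0 -> lincomb e w) (lincomb e)) Gz _.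
- exact: lincomb0.
- exact: lincombD.
- by move=> w _; apply.
apply: hs_decomp => [d a w _ Pw d0|i d w Gw _ d1|x xhs x0].
- by apply/lincombZ/Pw.
- by rewrite (homog_neg_eq0 _ _ _ Gw) ?(lin0 (X_linear i)); [exact: lincomb0 | lia].
- by apply: He; rewrite map_f // mem_filter x0 eqxx.
Qed.

Section MonomialBasis.
Context {m : nat} {e : 'I_m -> M}.
Hypotheses (Ge : forall j, G 0 (e j)) (efree : free_fam e)
  (espan : forall z, G 0 z -> lincomb e z).

Let monomial (k : {ffun 'I_n -> nat} * 'I_m) := xmono X k.1 (e k.2).

Lemma D_monomial i k :
  D i (monomial k) = (k.1 i)%:R *: monomial (mono_sub1 k.1 i, k.2).
Proof.
have De : D i (e k.2) = 0 by apply: (homog_neg_eq0 (0 - 1)) => //; exact: homogDi.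
by rewrite /monomial D_xmono De (lin0 (xmono_linear _)) add0r.
Qed.

Lemma lincomb_monomial_homog (N : nat) z : G N%:Z z -> lincomb monomial z.
Proof.
elim: N z => [|N IH] z Gz.
  have gf j : id (e j) = monomial ([ffun=> 0%N], j).
    by rewrite /monomial xmono_eq_id // => i; rewrite ffunE.
  exact: (lincomb_map (fun _ _ _ => erefl) gf (espan _ Gz)).
have [w Gw ->] := euler_image (isT : N.+1%:Z != 0) Gz.
apply: lincomb_sum => i _.
pose raise (k : {ffun 'I_n -> nat} * 'I_m) := (mono_add1 k.1 i, k.2).
apply: (lincomb_map (f := monomial) (h := raise) (X_linear i)) => [k|].
  by rewrite /monomial /= X_xmono.
by apply: IH; rewrite (_ : N%:Z = N.+1%:Z - 1); [exact: homogDi | lia].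
Qed.

Lemma lincomb_monomial v : lincomb monomial v.
Proof.
have [t [-> Gt]] := graded_decomp HG v.
rewrite big_seq; apply: lincomb_sum => x /Gt[Gx _].
have [d_neg|d_ge0] := ltrP x.1 0.
  by rewrite (homog_neg_eq0 _ _ d_neg Gx); exact: lincomb0.
by apply: (lincomb_monomial_homog `|x.1|%N); rewrite gez0_abs.
Qed.

Lemma monomial_free_deg0 s c :
  uniq s -> (forall k, k \in s -> mdeg k.1 = 0%N) ->
  \sum_(k <- s) c k *: monomial k = 0 -> forall k, k \in s -> c k = 0.
Proof.
move=> s_uniq s0 rel k0 k0s.
have s_deg0 k : k \in s -> k.1 = [ffun=> 0%N].
  move=> ks; apply/ffunP => i; rewrite ffunE.
  by have /eqP := s0 k ks; rewrite mdeg_eq0 => /forallP/(_ i)/eqP.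
pose c' j := \sum_(k <- s | k.2 == j) c k.
have rel' : \sum_j c' j *: e j = 0.
  rewrite -[RHS]rel -(sum_partition_seq s snd (index_enum 'I_m)) ?index_enum_uniq //;
    last first.
    by move=> k _; rewrite mem_index_enum.
  apply: eq_bigr => j _; rewrite scaler_suml big_seq_cond [RHS]big_seq_cond.
  apply: eq_bigr => k /andP[ks /eqP <-].
  by rewrite /monomial (s_deg0 k ks) xmono_eq_id // => i; rewrite ffunE.
have := efree c' rel' k0.2; rewrite /c' big_mkcond (bigD1_seq k0) //= eqxx.
rewrite big1_seq ?addr0 // => k /andP[k_neq0 ks]; case: eqP => // kk0.
case/negP: k_neq0; apply/eqP.
by rewrite [k]surjective_pairing [k0]surjective_pairing kk0 !s_deg0.
Qed.

(* Applying D_i to a relation among monomials of degree N+1 yields one among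
   monomials of degree N, with coefficients multiplied by the nonzero k.1 i. *)
Lemma monomial_free_deg (N : nat) s c :
  uniq s -> (forall k, k \in s -> mdeg k.1 = N) ->
  \sum_(k <- s) c k *: monomial k = 0 -> forall k, k \in s -> c k = 0.
Proof.
elim: N s c => [|N IH] s c s_uniq sN rel k0 k0s.
  exact: monomial_free_deg0 rel k0 k0s.
have [i k0i] : exists i, (0 < k0.1 i)%N.
  have : ~~ (mdeg k0.1 == 0)%N by rewrite sN.
  by rewrite mdeg_eq0 => /forallPn[i]; rewrite -lt0n; exists i.
pose lower (k : {ffun 'I_n -> nat} * 'I_m) := (mono_sub1 k.1 i, k.2).
pose s' := [seq lower k | k : {ffun 'I_n -> nat} * 'I_m <- s & (0 < k.1 i)%N].
pose c' p := c (mono_add1 p.1 i, p.2) * (p.1 i).+1%:R.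
have rel' : \sum_(p <- s') c' p *: monomial p = 0.
  have := congr1 (D i) rel; rewrite (lin_sum (D_linear i)) (lin0 (D_linear i)) => Drel.
  rewrite -[RHS]Drel big_map big_filter big_mkcond; apply: eq_bigr => -[al j] _ /=.
  rewrite (linZ (D_linear i)) D_monomial scalerA /=.
  have [ali|] := ltnP 0 (al i).
    by rewrite /c' /= mono_sub1K // ffunE eqxx subn1 prednK.
  by rewrite leqn0 => /eqP ->; rewrite mulr0 scale0r.
have s'_uniq : uniq s'.
  rewrite map_inj_in_uniq ?filter_uniq // => -[a j] [b j'].
  rewrite !mem_filter /= => /andP[ai _] /andP[bi _] [ab ->].
  by rewrite -(mono_sub1K _ _ ai) ab mono_sub1K.
have s'N p : p \in s' -> mdeg p.1 = N.
  by case/mapP=> k; rewrite mem_filter => /andP[ki ks] ->; rewrite mdeg_sub1 // sN.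
have k0s' : lower k0 \in s' by rewrite map_f // mem_filter k0i.
have := IH s' c' s'_uniq s'N rel' _ k0s'.
rewrite /c' /= mono_sub1K // ffunE eqxx subn1 prednK // => /eqP.
by rewrite mulf_eq0 ((pcharf0P K).1 Hch) eqn0Ngt k0i orbF -surjective_pairing => /eqP.
Qed.

Lemma monomial_free s c :
  uniq s -> \sum_(k <- s) c k *: monomial k = 0 -> forall k, k \in s -> c k = 0.
Proof.
move=> s_uniq rel k0 k0s.
pose t := [seq ((mdeg k.1)%:Z, c k *: monomial k) | k <- s].
have Gt x : x \in t -> G x.1 x.2.
  by case/mapP=> k _ -> /=; apply/(homogZ HG); rewrite -[_%:Z]add0r; exact: homog_xmono.
have t0 : 0 = \sum_(x <- t) x.2 by rewrite big_map rel.
have := homog_component HG Gt (homog0 HG (mdeg k0.1)%:Z) t0.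
rewrite big_map -big_filter => rel0.
apply: (monomial_free_deg (mdeg k0.1) _ c _ _ (esym rel0)).
- exact: filter_uniq.
- by move=> k; rewrite mem_filter => /andP[/eqP [] ->].
- by rewrite mem_filter eqxx.
Qed.

Lemma monomial_R_basis : R_basis X e.
Proof.
split=> [v|]; last exact: monomial_free.
by have [s [c vE]] := lincomb_uniq (lincomb_monomial v); exists s, c.
Qed.

End MonomialBasis.

End WeylModule.

Theorem mainTheorem11 (K : fieldType) (n : nat) (M : lmodType K)
    (X D : 'I_n -> M -> M) (G : int -> M -> Prop) :
  [pchar K] =i pred0 ->
  weyl_action X D -> graded G -> graded_action X D G ->
  gen_eulerian X D G -> fin_gen_R X ->
  (forall v : M, v = 0) \/
  exists (m : nat) (e : 'I_m -> M),
    (0 < m)%N /\ (forall j, G 0 (e j)) /\ R_basis X e.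
Proof.
move=> Hch HW HG HA HE HF.
have [m [e [Ge efree espan]]] := homog0_basis HW HG HA Hch HE HF.
have basis := monomial_R_basis HW HG HA Hch HE HF Ge efree espan.
case: m e Ge basis {efree espan} => [|m] e Ge basis; last by right; exists m.+1, e.
left=> v; have [s [c ->]] := basis.1 v.
by rewrite big1 // => -[al []].
Qed.
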